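(* Let $\mathcal{R}^{rsc}$ be a rich single-crossing domain and $F:\mathcal{R}^{rsc}\to\mathbb{Z}$ strategy-proof. Then the indirect preference correspondence $V^F$ is continuous: for every $R\in\mathcal{R}^{rsc}$ and every monotone sequence $\{R^n\}$ in $\mathcal{R}^{rsc}$ converging to $R$ in the order topology, the sequence $\{F(R^n)\}$ converges in $\mathbb{Z}$ and $\lim_n F(R^n)\;I\;F(R)$, where $I$ is the indifference relation of $R$. The same holds for mechanisms defined on a closed interval $[\underline R,\overline R]\subseteq\mathcal{R}^{rsc}$.
   Context: $\mathbb{Z}=[0,\infty)\times[0,1]$ with the Euclidean topology; $(t',q')<(t'',q'')$ means $t'<t''$, $q'<q''$; $x\le y$ means $x=y$ or $x<y$; $\square(z)=\{x:x\le z\}$. A classical preference is a complete transitive relation $R$ on $\mathbb{Z}$ (strict part $P$, indifference $I$) strictly decreasing in $t$ for fixed $q$, strictly increasing in $q$ for fixed $t$, with closed upper and lower contour sets. Distinct classical preferences satisfy single-crossing if any indifference set of one meets any indifference set of the other in at most one point. A rich single-crossing domain $\mathcal{R}^{rsc}$ is a set of pairwise single-crossing classical preferences such that for all $x'<x''$ some member is indifferent between them. For distinct members, $R'\prec R''$ means $\square(z)\cap\{x:xR''z\}\subseteq\square(z)\cap\{x:xR'z\}$ for all $z$; $\prec$ is a linear order and $\mathcal{R}^{rsc}$ has its order topology. A sequence is monotone if $R^n\precsim R^{n+1}$ for all $n$ or $R^{n+1}\precsim R^n$ for all $n$ ($\precsim$ means $\prec$ or $=$). A mechanism $F$ maps the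 domain to $\mathbb{Z}$ and is strategy-proof if $F(R')R'F(R'')$ for all $R',R''$. Its indirect preference correspondence is $V^F(R)=\{z\in\mathbb{Z}: z\,I\,F(R)\}$. *)

(* R : realType, points of Z live in R * R
   (product topology = Euclidean topology on R^2). *)
From HB Require Import structures.
From mathcomp Require Import all_boot all_order all_algebra.
From mathcomp Require Import all_classical all_reals all_analysis.
Set Implicit Arguments. Unset Strict Implicit. Unset Printing Implicit Defensive.
Import Order.TTheory GRing.Theory Num.Theory numFieldNormedType.Exports.
Local Open Scope classical_set_scope.
Local Open Scope ring_scope.

Notation pt R := (R * R)%type (only parsing).

Section Defs.
Variable R : realType.
Local Notation pt := (R * R)%type.

(* Z = [0,oo) x [0,1]; a point is (t, q) *)
Definition inZ (x : pt) : Prop := 0 <= x.1 /\ 0 <= x.2 <= 1.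

Definition lt_pt (x y : pt) : Prop := x.1 < y.1 /\ x.2 < y.2.
Definition le_pt (x y : pt) : Prop := x = y \/ lt_pt x y.

(* A preference is a binary relation ("x R y" = x is weakly preferred to y).
   It is required to live on Z (classical preferences below). *)
Definition pref := pt -> pt -> Prop.

Definition strict (P : pref) (x y : pt) : Prop := P x y /\ ~ P y x.
Definition indiff (P : pref) (x y : pt) : Prop := P x y /\ P y x.

Definition classical (P : pref) : Prop :=
  (forall x y, P x y -> inZ x /\ inZ y) /\
  (forall x y, inZ x -> inZ y -> P x y \/ P y x) /\
  (forall x y z, P x y -> P y z -> P x z) /\
  (forall t1 t2 q, inZ (t1, q) -> inZ (t2, q) -> t1 < t2 ->
      strict P (t1, q) (t2, q)) /\
  (forall t q1 q2, inZ (t, q1) -> inZ (t, q2) -> q1 < q2 ->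
      strict P (t, q2) (t, q1)) /\
  (forall z, inZ z ->
      closed [set x | inZ x /\ P x z] /\ closed [set x | inZ x /\ P z x]).

Definition indiff_set (P : pref) (z : pt) : set pt :=
  [set x | inZ x /\ indiff P x z].

Definition single_crossing (P1 P2 : pref) : Prop :=
  forall z1 z2, inZ z1 -> inZ z2 ->
  forall x y, indiff_set P1 z1 x -> indiff_set P2 z2 x ->
              indiff_set P1 z1 y -> indiff_set P2 z2 y -> x = y.

Definition rich_single_crossing (D : set pref) : Prop :=
  (forall P, D P -> classical P) /\
  (forall P1 P2, D P1 -> D P2 -> P1 <> P2 -> single_crossing P1 P2) /\
  (forall x y, inZ x -> inZ y -> lt_pt x y ->
     exists P, D P /\ indiff P x y).

Definition box (z : pt) : set pt := [set x | inZ x /\ le_pt x z].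

Definition prec (P1 P2 : pref) : Prop :=
  P1 <> P2 /\
  forall z, inZ z ->
    box z `&` [set x | P2 x z] `<=` box z `&` [set x | P1 x z].

Definition precsim (P1 P2 : pref) : Prop := prec P1 P2 \/ P1 = P2.

Definition monotone_seq (Rn : nat -> pref) : Prop :=
  (forall n, precsim (Rn n) (Rn n.+1)) \/
  (forall n, precsim (Rn n.+1) (Rn n)).

(* convergence in the order topology of (J, ≺): every subbasic open ray of J
   containing P eventually contains the sequence *)
Definition order_converges (J : set pref) (Rn : nat -> pref) (P : pref) : Prop :=
  (forall a, J a -> prec a P -> exists N, forall n, (N <= n)%N -> prec a (Rn n)) /\
  (forall b, J b -> prec P b -> exists N, forall n, (N <= n)%N -> prec (Rn n) b).

Definition closed_interval (D : set pref) (Plo Phi : pref) : set pref :=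
  [set P | D P /\ precsim Plo P /\ precsim P Phi].

Definition mechanism_on (J : set pref) (F : pref -> pt) : Prop :=
  forall P, J P -> inZ (F P).

Definition strategy_proof (J : set pref) (F : pref -> pt) : Prop :=
  forall P1 P2, J P1 -> J P2 -> P1 (F P1) (F P2).

Definition indirect_pref (F : pref -> pt) (P : pref) : set pt :=
  [set z | inZ z /\ indiff P z (F P)].

Definition VF_continuous (J : set pref) (F : pref -> pt) : Prop :=
  forall P, J P -> forall Rn : nat -> pref, (forall n, J (Rn n)) ->
    monotone_seq Rn -> order_converges J Rn P ->
    exists z : pt, inZ z /\ ((fun n => F (Rn n)) @ \oo --> z) /\
                   indirect_pref F P z.

End Defs.

(* Single crossing makes the relation [box_incl] underlying [prec] a total order on the
   domain.  If neither [box_incl P Q] nor [box_incl Q P] held, the open sets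
   [opposed_below P Q] and [opposed_below Q P] (points [y] below which some point is strictly
   preferred to [y] by one preference and strictly worse for the other) would both meet the
   connected quadrant [posZ], which they cover.  They cannot meet: between two such witnesses,
   single crossing forces every horizontal level to be won by exactly one of [P], [Q], and
   the levels won by each are open, which contradicts connectedness of the segment.

   Strategy-proofness makes [F] coordinatewise monotone for this order, so along a monotone
   sequence [R^n] converging to [R] the outcomes converge monotonically to some [z], and
   [F R] is weakly preferred to [z] since lower contour sets are closed.  If [z] were strictly
   worse than [F R], richness gives a preference [a] indifferent between [F R] and a point
   slightly better than [z]; [a] lies strictly between [R] and the [R^n] for large [n], so it
   ranks the [F R^n], hence [z], weakly above [F R], which contradicts its monotonicity. *)

From mathcomp Require Import all_boot all_order all_algebra.
From mathcomp Require Import all_classical all_reals all_analysis.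
From mathcomp Require Import lra.
Set Implicit Arguments. Unset Strict Implicit. Unset Printing Implicit Defensive.
Import Order.TTheory GRing.Theory Num.Theory numFieldNormedType.Exports.
Local Open Scope classical_set_scope.
Local Open Scope ring_scope.

Section Connected.
Variable T : topologicalType.
Implicit Types S A B : set T.

Lemma connected_open_cover S A B : connected S -> open A -> open B ->
  S `<=` A `|` B -> S `&` A !=set0 -> S `&` B !=set0 -> S `&` A `&` B !=set0.
Proof.
move=> cS oA oB SAB SA0 [b [Sb Bb]]; apply: contrapT => noAB.
have SAS : S `&` A = S.
  apply: cS => //; first by exists A.
  exists (~` B); first exact: open_closedC.
  apply/seteqP; split=> [x [Sx Ax]|x [Sx nBx]]; split=> //.
    by move=> Bx; apply: noAB; exists x.
  by case: (SAB x Sx).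
have [_ Ab] : (S `&` A) b by rewrite SAS.
by apply: noAB; exists b.
Qed.

Lemma connected_closed_cover S A B : connected S -> closed A -> closed B ->
  S `<=` A `|` B -> S `&` A !=set0 -> S `&` B !=set0 -> S `&` A `&` B !=set0.
Proof.
move=> cS cA cB SAB [a [Sa Aa]] [b [Sb Bb]]; apply: contrapT => noAB.
have notAB x : S x -> A x -> B x -> False by move=> *; apply: noAB; exists x.
have cov : S `<=` ~` B `|` ~` A.
  by move=> x Sx; apply/not_andP => -[Bx Ax]; exact: notAB Sx Ax Bx.
have [x [[Sx nBx] nAx]] := connected_open_cover cS (closed_openC cB)
  (closed_openC cA) cov (ex_intro _ a (conj Sa (notAB a Sa Aa)))
  (ex_intro _ b (conj Sb (fun Ab => notAB b Sb Ab Bb))).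
by case: (SAB x Sx).
Qed.

End Connected.

Lemma inZP (R : realType) (x : R * R) : inZ x <-> [/\ 0 <= x.1, 0 <= x.2 & x.2 <= 1].
Proof. by split=> [[? /andP[? ?]]|[? ? ?]]; split=> //; apply/andP. Qed.

Section Plane.
Variable R : realType.
Local Notation pt := (R * R)%type.

Lemma continuous_hline (q : R) : continuous (fun s : R => (s, q)).
Proof. by move=> s; exact: (cvg_pair cvg_id (cvg_cst q)). Qed.

Lemma continuous_vline (t : R) : continuous (fun s : R => (t, s)).
Proof. by move=> s; exact: (cvg_pair (cvg_cst t) cvg_id). Qed.

Lemma connected_interval_image (f : R -> pt) (I : set R) :
  continuous f -> is_interval I -> connected (f @` I).
Proof.
move=> cf iI; apply: connected_continuous_connected; first exact/connected_intervalP.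
exact: continuous_subspaceT.
Qed.

Lemma open_shift (U : set pt) (x : pt) (m : R) : open U -> U x -> 0 < m ->
  exists d, [/\ 0 < d < m, U (x.1 + d, x.2), U (x.1 - d, x.2) & U (x.1, x.2 + d)].
Proof.
move=> oU Ux m0; have /nbhs_ballP[e e0 eU] : nbhs x U by exact: open_nbhs_nbhs.
have near_x a b : `|a| < e -> `|b| < e -> U (x.1 + a, x.2 + b).
  by move=> ae be; apply: eU; split; rewrite /= -ball_normE /ball_ /= opprD addrA subrr sub0r normrN.
have em : 0 < Num.min e m by rewrite lt_min e0.
have [le_e le_m] : Num.min e m <= e /\ Num.min e m <= m by rewrite !ge_min !lexx orbT.
set d := Num.min e m / 2.
have dn : `|d| < e by rewrite ger0_norm /d; lra.
have zn : `|0 : R| < e by rewrite normr0.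
exists d; split; first by apply/andP; split; rewrite /d; lra.
- by have := near_x d 0 dn zn; rewrite addr0.
- by have := near_x (- d) 0 _ zn; rewrite addr0 normrN; apply.
- by have := near_x 0 d zn dn; rewrite addr0.
Qed.

Lemma open_lt_pt (x : pt) : open [set y | lt_pt x y].
Proof.
have fst_cont : continuous (@fst R R) by move=> y; exact: cvg_fst.
have snd_cont : continuous (@snd R R) by move=> y; exact: cvg_snd.
rewrite (_ : [set y | lt_pt x y] =
  fst @^-1` [set t | x.1 < t] `&` snd @^-1` [set t | x.2 < t]) //.
by apply: openI; apply: open_comp;
  [move=> y _; exact: fst_cont|exact: open_gt|move=> y _; exact: snd_cont|exact: open_gt].
Qed.

Lemma cvg_pt (u : nat -> pt) (l1 l2 : R) : (fun n => (u n).1) @ \oo --> l1 ->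
  (fun n => (u n).2) @ \oo --> l2 -> u @ \oo --> (l1, l2).
Proof.
move=> cv1 cv2; rewrite (_ : u = fun n => ((u n).1, (u n).2)); first exact: (cvg_pair cv1 cv2).
by apply: funext => n; rewrite -surjective_pairing.
Qed.

Lemma nondecreasing_bounded_cvgn (f : nat -> R) (M : R) : nondecreasing_seq f ->
  (forall n, f n <= M) -> exists l, [/\ f @ \oo --> l, forall n, f n <= l & l <= M].
Proof.
move=> nd fM; have ub : has_ubound (range f) by exists M => _ [n _ <-].
exists (sup (range f)); split; first exact: nondecreasing_cvgn.
  by move=> n; apply: sup_upper_bound; [split=> //; exists (f 0%N), 0%N|exists n].
by apply: ge_sup; [exists (f 0%N), 0%N|move=> _ [n _ <-]].
Qed.

Lemma nonincreasing_bounded_cvgn (f : nat -> R) (M : R) : nonincreasing_seq f ->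
  (forall n, M <= f n) -> exists l, [/\ f @ \oo --> l, forall n, l <= f n & M <= l].
Proof.
move=> ni Mf; have lb : has_lbound (range f) by exists M => _ [n _ <-].
exists (inf (range f)); split; first exact: nonincreasing_cvgn.
  by move=> n; apply: ge_inf => //; exists n.
by apply: lb_le_inf; [exists (f 0%N), 0%N|move=> _ [n _ <-]].
Qed.

Definition coord_le (x y : pt) := x.1 <= y.1 /\ x.2 <= y.2.

Lemma nondecreasing_bounded_cvg (u : nat -> pt) (w : pt) :
  {homo u : m n / (m <= n)%N >-> coord_le m n} -> (forall n, coord_le (u n) w) ->
  exists z, [/\ u @ \oo --> z, forall n, coord_le (u n) z & coord_le z w].
Proof.
move=> nd uw.
have [l1 [cv1 ul1 l1w]] := nondecreasing_bounded_cvgn (fun m n mn => (nd m n mn).1) (fun n => (uw n).1).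
have [l2 [cv2 ul2 l2w]] := nondecreasing_bounded_cvgn (fun m n mn => (nd m n mn).2) (fun n => (uw n).2).
by exists (l1, l2); split; [exact: cvg_pt|split|split].
Qed.

Lemma nonincreasing_bounded_cvg (u : nat -> pt) (w : pt) :
  {homo u : m n / (m <= n)%N >-> coord_le n m} -> (forall n, coord_le w (u n)) ->
  exists z, [/\ u @ \oo --> z, forall n, coord_le z (u n) & coord_le w z].
Proof.
move=> ni wu.
have [l1 [cv1 ul1 l1w]] := nonincreasing_bounded_cvgn (fun m n mn => (ni m n mn).1) (fun n => (wu n).1).
have [l2 [cv2 ul2 l2w]] := nonincreasing_bounded_cvgn (fun m n mn => (ni m n mn).2) (fun n => (wu n).2).
by exists (l1, l2); split; [exact: cvg_pt|split|split].
Qed.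

Definition posZ : set pt := [set y | 0 < y.1 /\ 0 < y.2 <= 1].

Lemma posZ_inZ y : posZ y -> inZ y.
Proof. by case=> y1 /andP[y2 y3]; apply/inZP; split; rewrite // ltW. Qed.

Lemma connected_posZ : connected posZ.
Proof.
have -> : posZ = \bigcup_(t in `]0, +oo[)
    ((fun s => (t, s)) @` `]0, 1] `|` (fun s => (s, 1)) @` `]0, +oo[).
  apply/seteqP; split=> [y [y1 y2]|y [t /= t0 [[s s01 <-]|[s s0 <-]]]].
  - exists y.1; first by rewrite /= in_itv /= y1.
    by left; exists y.2; [rewrite /= in_itv|rewrite -surjective_pairing].
  - by move: t0 s01; rewrite !in_itv /= andbT.
  - by move: s0; rewrite in_itv /= andbT => s0; split => //; rewrite ltr01 lexx.
apply: bigcup_connected.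
  exists (1, 1) => t _; right; exists 1 => //.
  by rewrite /= in_itv /= ltr01.
move=> t t0; apply: connectedU.
- exists (t, 1); split; first by exists 1 => //; rewrite /= in_itv /= ltr01 lexx.
  by exists t.
- by apply: connected_interval_image; [exact: continuous_vline|exact: interval_is_interval].
- by apply: connected_interval_image; [exact: continuous_hline|exact: interval_is_interval].
Qed.

End Plane.

Section Classical.
Variables (R : realType) (P : pref R).
Hypothesis cP : classical P.
Implicit Types x y z : R * R.

Lemma pref_inZ x y : P x y -> inZ x /\ inZ y.
Proof. by case: cP => h _; apply: h. Qed.

Lemma pref_total x y : inZ x -> inZ y -> P x y \/ P y x.
Proof. by case: cP => _ [h _]; apply: h. Qed.

Lemma pref_trans x y z : P x y -> P y z -> P x z.
Proof. by case: cP => _ [_ [h _]]; apply: h. Qed.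

Lemma pref_refl x : inZ x -> P x x.
Proof. by move=> Zx; case: (pref_total Zx Zx). Qed.

Lemma closed_upper z : inZ z -> closed [set x | P x z].
Proof.
case: cP => _ [_ [_ [_ [_ cl]]]] /cl[+ _].
congr closed; apply/seteqP; split=> [x [] //|x Pxz].
by split=> //; exact: (pref_inZ Pxz).1.
Qed.

Lemma closed_lower z : inZ z -> closed [set x | P z x].
Proof.
case: cP => _ [_ [_ [_ [_ cl]]]] /cl[_].
congr closed; apply/seteqP; split=> [x [] //|x Pzx].
by split=> //; exact: (pref_inZ Pzx).2.
Qed.

Lemma cvg_pref_upper (u : nat -> R * R) z l : inZ z ->
  (\forall n \near \oo, P (u n) z) -> u @ \oo --> l -> P l z.
Proof. by move=> Zz ev; apply: (closed_cvg [set x | P x z] (closed_upper Zz) ev). Qed.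

Lemma cvg_pref_lower (u : nat -> R * R) z l : inZ z ->
  (\forall n \near \oo, P z (u n)) -> u @ \oo --> l -> P z l.
Proof. by move=> Zz ev; apply: (closed_cvg [set x | P z x] (closed_lower Zz) ev). Qed.

Lemma pref_dominate x y : inZ x -> inZ y -> x.1 <= y.1 -> y.2 <= x.2 -> P x y.
Proof.
case: cP => _ [_ [_ [decr_t [incr_q _]]]] Zx Zy le1 le2.
have [x1 x2 x3] := (inZP x).1 Zx; have [y1 y2 y3] := (inZP y).1 Zy.
have Zm : inZ (x.1, y.2) by apply/inZP.
apply: (@pref_trans _ (x.1, y.2)).
  have [->|lt2] := eqVneq y.2 x.2; first by rewrite -surjective_pairing; apply: pref_refl.
  rewrite [X in P X]surjective_pairing; apply: (incr_q _ _ _ Zm _ _).1; first by apply/inZP.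
  by rewrite lt_neqAle lt2.
have [->|lt1] := eqVneq x.1 y.1; first by rewrite -surjective_pairing; apply: pref_refl.
rewrite [X in P _ X]surjective_pairing; apply: (decr_t _ _ _ Zm _ _).1; first by apply/inZP.
by rewrite lt_neqAle lt1.
Qed.

Lemma npref_dominate x y : inZ x -> inZ y -> x.1 <= y.1 -> y.2 <= x.2 ->
  x.1 < y.1 \/ y.2 < x.2 -> ~ P y x.
Proof.
case: cP => _ [_ [_ [decr_t [incr_q _]]]] Zx Zy le1 le2 lt Pyx.
have [x1 x2 x3] := (inZP x).1 Zx; have [y1 y2 y3] := (inZP y).1 Zy.
have Zy' : inZ (y.1, y.2) by rewrite -surjective_pairing.
case: lt => [lt1|lt2].
- have Zm : inZ (x.1, y.2) by apply/inZP.
  apply: (decr_t x.1 y.1 y.2 Zm Zy' lt1).2; rewrite -surjective_pairing.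
  by apply: pref_trans Pyx (pref_dominate Zx Zm _ _).
- have Zm : inZ (y.1, x.2) by apply/inZP.
  apply: (incr_q y.1 y.2 x.2 Zy' Zm lt2).2; rewrite -surjective_pairing.
  by apply: pref_trans Pyx (pref_dominate Zx Zm _ _).
Qed.

Lemma connected_indiff (S : set (R * R)) y : connected S -> S `<=` @inZ R -> inZ y ->
  (exists2 u, S u & P u y) -> (exists2 u, S u & P y u) -> exists2 x, S x & indiff P x y.
Proof.
move=> cS SZ Zy [u Su Puy] [v Sv Pyv].
have [|||x [[Sx Pxy] Pyx]] := connected_closed_cover cS (closed_upper Zy) (closed_lower Zy).
- by move=> x Sx; apply: pref_total (SZ x Sx) Zy.
- by exists u.
- by exists v.
by exists x.
Qed.

Lemma indiff_on_level y s q : inZ y -> 0 <= s -> s < y.1 -> 0 <= q -> q < y.2 ->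
  P (s, q) y -> exists m, [/\ s <= m, m < y.1 & indiff P (m, q) y].
Proof.
move=> Zy s0 sy q0 qy Psy; have [y1 y2 y3] := (inZP y).1 Zy.
have Zl r : s <= r <= y.1 -> inZ (r, q) by move=> /andP[? ?]; apply/inZP; split=> /=; lra.
have [|u /= u_in||||x [r + <-] indx] := @connected_indiff ((fun r => (r, q)) @` `[s, y.1]) y.
- by apply: connected_interval_image; [exact: continuous_hline|exact: interval_is_interval].
- by case: u_in => r; rewrite /= in_itv /= => /Zl Zr <-.
- by [].
- by exists (s, q) => //; exists s => //; rewrite /= in_itv /= lexx ltW.
- exists (y.1, q); first by exists y.1 => //; rewrite /= in_itv /= lexx ltW.
  by apply: pref_dominate => //=; [apply: Zl; rewrite lexx ltW|lra].
rewrite /= in_itv /= => /andP[sr ry]; exists r; split=> //.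
rewrite lt_neqAle ry andbT; apply/negP => /eqP req; move: indx => [Pry _].
by apply: (npref_dominate Zy (Zl r _) _ _ _ Pry) => /=; [rewrite sr ry|lra|lra|right].
Qed.

Lemma indiff_below y : inZ y -> 0 < y.1 -> 0 < y.2 ->
  exists x, [/\ inZ x, lt_pt x y & indiff P x y].
Proof.
move=> Zy y1 y2; have [_ _ y3] := (inZP y).1 Zy.
have Z0 r : 0 <= r <= y.2 -> inZ (0, r) by move=> /andP[? ?]; apply/inZP; split=> /=; lra.
have Z00 : @inZ R (0, 0) by apply: Z0; rewrite lexx ltW.
have [P0y|Py0] := pref_total Z00 Zy.
  have [m [m0 my indm]] := indiff_on_level Zy (lexx 0) y1 (lexx 0) y2 P0y.
  by exists (m, 0); split=> //; apply/inZP; split=> /=; lra.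
have [|u /= u_in||||x [r + <-] indx] := @connected_indiff ((fun r => (0, r)) @` `[0, y.2]) y.
- by apply: connected_interval_image; [exact: continuous_vline|exact: interval_is_interval].
- by case: u_in => r; rewrite /= in_itv /= => /Z0 Zr <-.
- by [].
- exists (0, y.2); first by exists y.2 => //; rewrite /= in_itv /= lexx ltW.
  by apply: pref_dominate => //=; [apply: Z0; rewrite lexx ltW|lra].
- by exists (0, 0) => //; exists 0 => //; rewrite /= in_itv /= lexx ltW.
rewrite /= in_itv /= => rI; have [r0 ry] := andP rI.
exists (0, r); split; [exact: Z0|split=> //=|by []].
rewrite lt_neqAle ry andbT; apply/negP => /eqP req; case: indx => _ Pyr.
by apply: (npref_dominate (Z0 r rI) Zy _ _ _ Pyr) => /=; [lra|lra|left].
Qed.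

Lemma npref_left_of_indiff y m s q : indiff P (m, q) y -> inZ (s, q) -> s < m ->
  ~ P y (s, q).
Proof.
move=> [Pmy _] Zs sm Pys; have [Zm _] := pref_inZ Pmy.
by apply: (npref_dominate Zs Zm) (pref_trans Pmy Pys) => /=; lra.
Qed.

Lemma npref_right_of_indiff y m s q : indiff P (m, q) y -> inZ (s, q) -> m < s ->
  ~ P (s, q) y.
Proof.
move=> [_ Pym] Zs ms Psy; have [_ Zm] := pref_inZ Pym.
by apply: (npref_dominate Zm Zs) (pref_trans Psy Pym) => /=; lra.
Qed.

End Classical.

Section Opposition.
Variable R : realType.
Implicit Types (P Q : pref R) (x y u : R * R).

(* [prec P1 P2] unfolds to [P1 <> P2 /\ box_incl P1 P2]. *)
Definition box_incl P1 P2 := forall z, inZ z ->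
  box z `&` [set x | P2 x z] `<=` box z `&` [set x | P1 x z].

Definition opposed P Q y u := ~ P y u /\ ~ Q u y.

Definition opposed_below P Q y := exists x, [/\ inZ x, lt_pt x y & opposed P Q y x].

Definition opposed_on_level P Q y (q : R) :=
  exists s, [/\ 0 <= s, s < y.1 & opposed P Q y (s, q)].

Lemma box_incl_lt P1 P2 x z : box_incl P1 P2 -> inZ x -> inZ z -> lt_pt x z ->
  P2 x z -> P1 x z.
Proof. by move=> incl Zx Zz xz P2xz; case: (incl z Zz x (conj (conj Zx (or_intror xz)) P2xz)). Qed.

Lemma single_crossing_sym P Q : single_crossing P Q -> single_crossing Q P.
Proof. by move=> sc z1 z2 Z1 Z2 x y Px Qx Py Qy; apply: (sc z2 z1). Qed.

Variables P Q : pref R.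
Hypotheses (cP : classical P) (cQ : classical Q).

Lemma open_opposed_below : open [set y | opposed_below P Q y].
Proof.
have -> : [set y | opposed_below P Q y] =
    \bigcup_(x in @inZ R) ([set y | lt_pt x y] `&` [set y | opposed P Q y x]).
  by apply/seteqP; split=> [y [x [Zx xy oyx]]|y [x Zx [xy oyx]]]; exists x.
apply: bigcup_open => x Zx; apply: openI; first exact: open_lt_pt.
rewrite (_ : [set y | opposed P Q y x] = ~` [set y | P y x] `&` ~` [set y | Q x y]) //.
exact: openI (closed_openC (closed_upper cP Zx)) (closed_openC (closed_lower cQ Zx)).
Qed.

Lemma open_opposed_on_level y : inZ y -> open [set q | opposed_on_level P Q y q].
Proof.
move=> Zy; have -> : [set q | opposed_on_level P Q y q] =
    \bigcup_(s in [set s | 0 <= s < y.1]) ((fun q => (s, q)) @^-1` [set u | opposed P Q y u]).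
  apply/seteqP; split=> [q [s [s0 sy oq]]|q [s /andP[s0 sy] oq]]; last by exists s.
  by exists s => //; apply/andP.
apply: bigcup_open => s _; apply: open_comp => [q _|]; first exact: continuous_vline.
rewrite (_ : [set u | opposed P Q y u] = ~` [set u | P y u] `&` ~` [set u | Q u y]) //.
exact: openI (closed_openC (closed_lower cP Zy)) (closed_openC (closed_upper cQ Zy)).
Qed.

Lemma opposed_on_level_excl y q : inZ y -> 0 <= q <= 1 ->
  opposed_on_level P Q y q -> opposed_on_level Q P y q -> False.
Proof.
move=> Zy /andP[q0 q1] [s [s0 _ [nPys nQsy]]] [s' [s'0 _ [nQys' nPs'y]]].
have Zs : inZ (s, q) by apply/inZP.
have Zs' : inZ (s', q) by apply/inZP.
have [ss'|s's] := leP s s'.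
  have Qs'y : Q (s', q) y by case: (pref_total cQ Zy Zs') => // /nQys'.
  exact/nQsy/(pref_trans cQ (pref_dominate cQ Zs Zs' ss' (lexx q)) Qs'y).
have Psy : P (s, q) y by case: (pref_total cP Zy Zs) => // /nPys.
exact/nPs'y/(pref_trans cP (pref_dominate cP Zs' Zs (ltW s's) (lexx q)) Psy).
Qed.

Lemma not_box_incl_opposed_below : ~ box_incl Q P -> exists y, inZ y /\ opposed_below P Q y.
Proof.
move=> nincl; apply: contrapT => nopp; apply: nincl => z Zz x [[Zx [->|xz]] /= Pxz].
  split; first by split=> //; left.
  by have := pref_refl cQ Zz.
split; first by split=> //; right.
apply: contrapT => nQ; case: xz => xz1 xz2.
have [x1 x2 x3] := (inZP x).1 Zx; have [z1 z2 z3] := (inZP z).1 Zz.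
have [|d [/andP[d0 dz] _ _ nQu]] :=
  open_shift (m := z.2 - x.2) (closed_openC (closed_upper cQ Zz)) nQ; first by rewrite subr_gt0.
have Zu : inZ (x.1, x.2 + d) by apply/inZP; split=> /=; lra.
apply: nopp; exists z; split=> //; exists (x.1, x.2 + d); split=> //; first by split=> /=; lra.
split=> // Pzu.
by apply: (npref_dominate cP Zu Zx) (pref_trans cP Pxz Pzu) => /=; lra.
Qed.

Hypothesis sc : single_crossing P Q.

Lemma single_crossing_indiff_eq x y : inZ x -> inZ y ->
  indiff P x y -> indiff Q x y -> x = y.
Proof.
move=> Zx Zy Px Qx; have [Pyy Qyy] := (pref_refl cP Zy, pref_refl cQ Zy).
exact: (sc Zy Zy (conj Zx Px) (conj Zx Qx) (conj Zy (conj Pyy Pyy)) (conj Zy (conj Qyy Qyy))).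
Qed.

Lemma opposed_on_level_cover y s q : inZ y -> 0 <= s -> s < y.1 -> 0 <= q -> q < y.2 ->
  ~ P y (s, q) -> opposed_on_level P Q y q \/ opposed_on_level Q P y q.
Proof.
move=> Zy s0 sy q0 qy nPys; have [y1 y2 y3] := (inZP y).1 Zy.
have Zl r : 0 <= r -> inZ (r, q) by move=> r0; apply/inZP; split=> /=; lra.
have [Qsy|nQsy] := pselect (Q (s, q) y); last by left; exists s.
have Psy : P (s, q) y by case: (pref_total cP Zy (Zl s s0)) => // /nPys.
have [mP [smP mPy indP]] := indiff_on_level cP Zy s0 sy q0 qy Psy.
have [mQ [smQ mQy indQ]] := indiff_on_level cQ Zy s0 sy q0 qy Qsy.
have [mQP|mPQ|mQP] := ltgtP mQ mP.
- left; exists ((mQ + mP) / 2); split; [lra|lra|split].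
  + by apply: (npref_left_of_indiff cP indP); [apply: Zl|]; lra.
  + by apply: (npref_right_of_indiff cQ indQ); [apply: Zl|]; lra.
- right; exists ((mQ + mP) / 2); split; [lra|lra|split].
  + by apply: (npref_left_of_indiff cQ indQ); [apply: Zl|]; lra.
  + by apply: (npref_right_of_indiff cP indP); [apply: Zl|]; lra.
(* (mP, q) would be a second common point of the indifference curves through y. *)
rewrite mQP in indQ.
have := single_crossing_indiff_eq (Zl mP (le_trans s0 smP)) Zy indP indQ.
by move/(congr1 fst) => /=; lra.
Qed.

Lemma opposed_below_total y : inZ y -> 0 < y.1 -> 0 < y.2 ->
  opposed_below P Q y \/ opposed_below Q P y.
Proof.
move=> Zy y1 y2; apply: contrapT => /not_orP[nPQ nQP].
have [x [Zx [xy1 xy2] [Pxy Pyx]]] := indiff_below cP Zy y1 y2.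
have [x1 x2 x3] := (inZP x).1 Zx; have [_ _ y3] := (inZP y).1 Zy.
suff indQ : indiff Q x y.
  have := single_crossing_indiff_eq Zx Zy (conj Pxy Pyx) indQ.
  by move/(congr1 fst) => /=; lra.
split; apply: contrapT => nQ.
- have [|d [/andP[d0 dy] _ _ nQu]] :=
    open_shift (m := y.2 - x.2) (closed_openC (closed_upper cQ Zy)) nQ; first lra.
  have Zu : inZ (x.1, x.2 + d) by apply/inZP; split=> /=; lra.
  apply: nPQ; exists (x.1, x.2 + d); split=> //; first by split=> /=; lra.
  split=> // Pyu.
  by apply: (npref_dominate cP Zu Zx) (pref_trans cP Pxy Pyu) => /=; lra.
- have [|d [/andP[d0 dy] nQu _ _]] :=
    open_shift (m := y.1 - x.1) (closed_openC (closed_lower cQ Zy)) nQ; first lra.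
  have Zu : inZ (x.1 + d, x.2) by apply/inZP; split=> /=; lra.
  apply: nQP; exists (x.1 + d, x.2); split=> //; first by split=> /=; lra.
  split=> // Puy.
  by apply: (npref_dominate cP Zx Zu) (pref_trans cP Puy Pyx) => /=; lra.
Qed.

End Opposition.

Section PrecOrder.
Variable R : realType.
Implicit Types P Q : pref R.

Lemma box_incl_refl P : box_incl P P.
Proof. by move=> z Zz x. Qed.

Lemma box_incl_trans P1 P2 P3 : box_incl P1 P2 -> box_incl P2 P3 -> box_incl P1 P3.
Proof. by move=> h12 h23 z Zz x /(h23 z Zz)/(h12 z Zz). Qed.

Lemma precsim_box_incl P1 P2 : precsim P1 P2 -> box_incl P1 P2.
Proof. by case=> [[_ //]|->]; exact: box_incl_refl. Qed.

Lemma box_incl_gt P1 P2 w x : classical P1 -> classical P2 -> box_incl P1 P2 ->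
  inZ w -> inZ x -> lt_pt w x -> P1 x w -> P2 x w.
Proof.
move=> c1 c2 incl Zw Zx [wx1 wx2] P1xw; apply: contrapT => nP2.
have [w1 w2 w3] := (inZP w).1 Zw; have [x1 x2 x3] := (inZP x).1 Zx.
have [|d [/andP[d0 dx] _ nP2u _]] :=
  open_shift (m := x.1 - w.1) (closed_openC (closed_upper c2 Zw)) nP2; first lra.
have Zu : inZ (x.1 - d, x.2) by apply/inZP; split=> /=; lra.
have P2wu : P2 w (x.1 - d, x.2) by case: (pref_total c2 Zu Zw) => // /nP2u.
have P1wu : P1 w (x.1 - d, x.2) by apply: (box_incl_lt incl) => //; split=> /=; lra.
by apply: (npref_dominate c1 Zu Zx) (pref_trans c1 P1xw P1wu) => /=; lra.
Qed.

Lemma opposed_below_asym P Q y : classical P -> classical Q -> single_crossing P Q ->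
  inZ y -> opposed_below P Q y -> opposed_below Q P y -> False.
Proof.
move=> cP cQ sc Zy [x [Zx [xy1 xy2] [nPyx nQxy]]] [x' [Zx' [x'y1 x'y2] [nQyx' nPx'y]]].
wlog le2 : P Q cP cQ sc x x' Zx Zx' xy1 xy2 x'y1 x'y2 nPyx nQxy nQyx' nPx'y / x.2 <= x'.2.
  move=> gen; have [le|lt] := leP x.2 x'.2; first exact: (gen P Q _ _ _ x x').
  exact: (gen Q P cQ cP (single_crossing_sym sc) x' x _ _ _ _ _ _ _ _ _ _ (ltW lt)).
have [y1 y2 y3] := (inZP y).1 Zy; have [x1 x2 x3] := (inZP x).1 Zx.
have [x'1 x'2 x'3] := (inZP x').1 Zx'.
have in_seg q : q \in `[x.2, x'.2] -> x.2 <= q <= x'.2 by rewrite in_itv.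
have [|||q [[/in_seg qI /= oPQ] /= oQP]] := connected_open_cover (@segment_connected R x.2 x'.2)
    (open_opposed_on_level cP cQ Zy) (open_opposed_on_level cQ cP Zy).
- move=> q /in_seg /andP[xq qx']; have Zq : inZ (x.1, q) by apply/inZP; split=> /=; lra.
  apply: (opposed_on_level_cover cP cQ sc Zy x1 xy1); [lra|lra|].
  by move=> Pyq; apply/nPyx/(pref_trans cP Pyq (pref_dominate cP Zq Zx (lexx _) xq)).
- exists x.2; split; first by rewrite /= in_itv /= lexx.
  by exists x.1; split=> //; rewrite -surjective_pairing.
- exists x'.2; split; first by rewrite /= in_itv /= lexx le2.
  by exists x'.1; split=> //; rewrite -surjective_pairing.
have [xq qx'] := andP qI.
by apply: (opposed_on_level_excl cP cQ Zy _ oPQ oQP); apply/andP; split; lra.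
Qed.

Lemma box_incl_total P Q : classical P -> classical Q -> single_crossing P Q ->
  box_incl P Q \/ box_incl Q P.
Proof.
move=> cP cQ sc; apply: contrapT => /not_orP[nPQ nQP].
have posZ_opp P' Q' y : inZ y -> opposed_below P' Q' y -> posZ y.
  move=> /inZP[_ _ y3] [x [/inZP[x1 x2 _] [xy1 xy2] _]].
  by split; [lra|apply/andP; split; lra].
have [y1 [Zy1 o1]] := not_box_incl_opposed_below cP cQ nQP.
have [y2 [Zy2 o2]] := not_box_incl_opposed_below cQ cP nPQ.
have [|||y [[/posZ_inZ Zy o1y] o2y]] := connected_open_cover (@connected_posZ R)
    (open_opposed_below cP cQ) (open_opposed_below cQ cP).
- move=> y posy; have [y1p /andP[y2p _]] := posy.
  by case: (opposed_below_total cP cQ sc (posZ_inZ posy) y1p y2p); [left|right].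
- by exists y1; split=> //; apply: posZ_opp o1.
- by exists y2; split=> //; apply: posZ_opp o2.
exact: opposed_below_asym cP cQ sc Zy o1y o2y.
Qed.

Lemma box_incl_asym P Q : classical P -> classical Q -> single_crossing P Q ->
  box_incl P Q -> box_incl Q P -> False.
Proof.
move=> cP cQ sc PQ QP; have Z11 : @inZ R (1, 1) by apply/inZP; split=> //=; lra.
have [] := opposed_below_total cP cQ sc Z11 ltr01 ltr01 => -[x [Zx xy [nP nQ]]].
- apply: nQ; apply: (box_incl_lt QP) => //.
  by case: (pref_total cP Zx Z11) => // /nP.
- apply: nQ; apply: (box_incl_lt PQ) => //.
  by case: (pref_total cQ Zx Z11) => // /nP.
Qed.

End PrecOrder.

Section Domain.
Variables (R : realType) (D : set (pref R)).
Hypothesis rD : rich_single_crossing D.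
Implicit Types (P Q : pref R) (x y z w : R * R).

Lemma domain_classical P : D P -> classical P.
Proof. by case: rD => cD _; apply: cD. Qed.

Lemma domain_single_crossing P Q : D P -> D Q -> P <> Q -> single_crossing P Q.
Proof. by case: rD => _ [scD _]; apply: scD. Qed.

Lemma prec_total P Q : D P -> D Q -> P <> Q -> prec P Q \/ prec Q P.
Proof.
move=> DP DQ PQ; have [incl|incl] := box_incl_total (domain_classical DP)
  (domain_classical DQ) (domain_single_crossing DP DQ PQ); first by left.
by right; split=> // /esym.
Qed.

Lemma box_incl_antisym P Q : D P -> D Q -> box_incl P Q -> box_incl Q P -> P = Q.
Proof.
move=> DP DQ PQ QP; apply: contrapT => nPQ.
exact: box_incl_asym (domain_classical DP) (domain_classical DQ)
  (domain_single_crossing DP DQ nPQ) PQ QP.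
Qed.

Lemma order_converges_interval Plo Phi P Rn : D Plo -> D Phi -> precsim Plo Phi ->
  closed_interval D Plo Phi P -> (forall n, closed_interval D Plo Phi (Rn n)) ->
  order_converges (closed_interval D Plo Phi) Rn P -> order_converges D Rn P.
Proof.
move=> DPlo DPhi lohi [DP [loP PHi]] JR [lo hi]; split.
- move=> a Da aP; have [Ja|nJa] := pselect (closed_interval D Plo Phi a); first exact: lo.
  have neLo : a <> Plo by move=> eLo; apply: nJa; rewrite eLo; split=> //; split=> //; right.
  exists 0%N => n _; case: (prec_total Da DPlo neLo) => [[_ aLo]|loa].
    have [_ [loR _]] := JR n; split; first by move=> eRn; apply: nJa; rewrite eRn.
    exact: box_incl_trans aLo (precsim_box_incl loR).
  exfalso; apply: nJa; split=> //; split; first by left.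
  have [->|neHi] := pselect (a = Phi); first by right.
  by left; split=> //; exact: box_incl_trans aP.2 (precsim_box_incl PHi).
- move=> b Db Pb; have [Jb|nJb] := pselect (closed_interval D Plo Phi b); first exact: hi.
  have neHi : b <> Phi by move=> eHi; apply: nJb; rewrite eHi; split=> //; split=> //; right.
  exists 0%N => n _; case: (prec_total Db DPhi neHi) => [hib|[_ Hib]].
    exfalso; apply: nJb; split=> //; split; last by left.
    have [->|neLo] := pselect (b = Plo); first by right.
    by left; split=> [eLo|]; [exact: neLo|exact: box_incl_trans (precsim_box_incl loP) Pb.2].
  have [_ [_ RHi]] := JR n; split; first by move=> eRn; apply: nJb; rewrite -eRn.
  exact: box_incl_trans (precsim_box_incl RHi) Hib.
Qed.

Variables (J : set (pref R)) (F : pref R -> R * R).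
Hypotheses (JD : J `<=` D) (mF : mechanism_on J F) (sF : strategy_proof J F).

Lemma strategy_proof_monotone Ra Rb : J Ra -> J Rb -> box_incl Ra Rb ->
  coord_le (F Ra) (F Rb).
Proof.
move=> Ja Jb incl; have [ca cb] := (domain_classical (JD Ja), domain_classical (JD Jb)).
have [Zx Zy] : inZ (F Ra) /\ inZ (F Rb) := conj (mF Ja) (mF Jb).
have [Raxy Rbyx] : Ra (F Ra) (F Rb) /\ Rb (F Rb) (F Ra) := conj (sF Ja Jb) (sF Jb Ja).
have le2 : (F Ra).2 <= (F Rb).2.
  rewrite leNgt; apply/negP => lt2; have [le1|lt1] := leP (F Ra).1 (F Rb).1.
    by apply: (npref_dominate cb Zx Zy le1 (ltW lt2) (or_intror lt2)).
  have yx : lt_pt (F Rb) (F Ra) by [].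
  have [eqR|neR] := pselect (Ra = Rb); first by move: lt2; rewrite eqR ltxx.
  have indRa : indiff Ra (F Rb) (F Ra) := conj (box_incl_lt incl Zy Zx yx Rbyx) Raxy.
  have indRb : indiff Rb (F Rb) (F Ra) := conj Rbyx (box_incl_gt ca cb incl Zy Zx yx Raxy).
  have sc := domain_single_crossing (JD Ja) (JD Jb) neR.
  by move: lt2; rewrite (single_crossing_indiff_eq ca cb sc Zy Zx indRa indRb) ltxx.
split=> //; rewrite leNgt; apply/negP => lt1.
exact: (npref_dominate ca Zy Zx (ltW lt1) le2 (or_introl lt1)).
Qed.

Lemma mechanism_cvg_lower P Rn z : J P -> (forall n, J (Rn n)) ->
  (fun n => F (Rn n)) @ \oo --> z -> inZ z /\ P (F P) z.
Proof.
move=> JP JR cv; have cP := domain_classical (JD JP).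
suff PFz : P (F P) z by split=> //; exact: (pref_inZ cP PFz).2.
by apply: (cvg_pref_lower cP (mF JP) _ cv); near=> n; exact: sF.
Unshelve. all: by end_near.
Qed.

Section Increasing.
Variables (P : pref R) (Rn : nat -> pref R).
Hypotheses (JP : J P) (JR : forall n, J (Rn n)).
Hypotheses (Rn_up : forall n, precsim (Rn n) (Rn n.+1)) (Rn_cvg : order_converges D Rn P).

Lemma increasing_box_incl : {homo Rn : m n / (m <= n)%N >-> box_incl m n}.
Proof.
exact: homo_leq (@box_incl_refl R) (fun Q2 Q1 Q3 => @box_incl_trans R Q1 Q2 Q3)
  (fun n => precsim_box_incl (Rn_up n)).
Qed.

Lemma box_incl_increasing_limit n : box_incl (Rn n) P.
Proof.
have [->|neP] := pselect (Rn n = P); first exact: box_incl_refl.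
case: (prec_total (JD (JR n)) (JD JP) neP) => [[_ //]|PRn].
have [N RnN] := Rn_cvg.2 _ (JD (JR n)) PRn.
have [neR incl] := RnN _ (leq_maxl N n); case: neR.
exact: box_incl_antisym (JD (JR _)) (JD (JR _)) incl (increasing_box_incl (leq_maxr N n)).
Qed.

Section Limit.
Variable z : R * R.
Hypotheses (cvz : (fun n => F (Rn n)) @ \oo --> z) (Fz : forall n, coord_le (F (Rn n)) z)
  (zw : coord_le z (F P)).

Lemma increasing_limit_not_on_edge : (F P).1 <= z.1 -> z.2 < (F P).2 -> False.
Proof.
move=> le1 lt2; have cR n := domain_classical (JD (JR n)).
have [Zw ZF] := (mF JP, fun n => mF (JR n)); have [Zz _] := mechanism_cvg_lower JP JR cvz.
have FP_gt n : lt_pt (F (Rn n)) (F P).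
  have [Fz1 Fz2] := Fz n; split; last lra.
  rewrite lt_neqAle (le_trans Fz1 zw.1) andbT; apply/negP => /eqP eq1.
  by apply: (npref_dominate (cR n) Zw (ZF n) _ _ _ (sF (JR n) JP)); rewrite ?eq1 //; lra.
have R0zw : Rn 0 z (F P).
  apply: (cvg_pref_upper (cR 0%N) Zw _ cvz); near=> n.
  exact: (box_incl_lt (increasing_box_incl (leq0n n)) (ZF n) Zw (FP_gt n) (sF (JR n) JP)).
by apply: (npref_dominate (cR 0%N) Zw Zz _ _ _ R0zw); lra.
Unshelve. all: by end_near.
Qed.

Lemma increasing_limit_interior : z.1 < (F P).1 -> z.2 < (F P).2 -> P z (F P).
Proof.
move=> lt1 lt2; apply: contrapT => nPzw.
have cP := domain_classical (JD JP); have Zw := mF JP.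
have [Zz _] := mechanism_cvg_lower JP JR cvz.
have [z1 z2 z3] := (inZP z).1 Zz; have [w1 w2 w3] := (inZP (F P)).1 Zw.
have [|d [/andP[d0 dw] _ _ nPu]] :=
  open_shift (m := (F P).2 - z.2) (closed_openC (closed_upper cP Zw)) nPzw; first lra.
have Zu : inZ (z.1, z.2 + d) by apply/inZP; split=> /=; lra.
have uw : lt_pt (z.1, z.2 + d) (F P) by split=> /=; lra.
have [a [Da [auw awu]]] := rD.2.2 _ _ Zu Zw uw; have ca := domain_classical Da.
have neP : a <> P by move=> eaP; apply: nPu; move: auw; rewrite eaP.
case: (prec_total Da (JD JP) neP) => [aP|[_ Pa]]; last exact/nPu/(box_incl_lt Pa Zu Zw uw auw).
have [N aRn] := Rn_cvg.1 a Da aP.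
have azw : a z (F P).
  apply: (cvg_pref_upper ca Zw _ cvz); exists N => // n /= Nn; have [Fz1 Fz2] := Fz n.
  by apply: (box_incl_lt (aRn n Nn).2 (mF (JR n)) Zw _ (sF (JR n) JP)); split; lra.
by apply: (npref_dominate ca Zu Zz) (pref_trans ca azw awu) => /=; lra.
Qed.

Lemma increasing_limit_upper : P z (F P).
Proof.
have cP := domain_classical (JD JP); have Zw := mF JP.
have [Zz _] := mechanism_cvg_lower JP JR cvz; have [z1 z2] := zw.
have [le2|lt2] := leP (F P).2 z.2; first exact: (pref_dominate cP Zz Zw z1 le2).
have [le1|lt1] := leP (F P).1 z.1; first by case: (increasing_limit_not_on_edge le1 lt2).
exact: increasing_limit_interior.
Qed.

End Limit.

Lemma increasing_indirect_pref :
  exists z, [/\ inZ z, (fun n => F (Rn n)) @ \oo --> z & indirect_pref F P z].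
Proof.
have [z [cvz Fz zw]] := nondecreasing_bounded_cvg
  (fun m n mn => strategy_proof_monotone (JR m) (JR n) (increasing_box_incl mn))
  (fun n => strategy_proof_monotone (JR n) JP (@box_incl_increasing_limit n)).
have [Zz PFz] := mechanism_cvg_lower JP JR cvz.
by exists z; split=> //; split=> //; split=> //; exact: increasing_limit_upper Fz zw.
Qed.

End Increasing.

Section Decreasing.
Variables (P : pref R) (Rn : nat -> pref R).
Hypotheses (JP : J P) (JR : forall n, J (Rn n)).
Hypotheses (Rn_down : forall n, precsim (Rn n.+1) (Rn n)) (Rn_cvg : order_converges D Rn P).

Lemma decreasing_box_incl : {homo Rn : m n / (m <= n)%N >-> box_incl n m}.
Proof.
exact: (@homo_leq _ Rn (fun Q1 Q2 => box_incl Q2 Q1)) (@box_incl_refl R)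
  (fun Q2 Q1 Q3 h12 h23 => box_incl_trans h23 h12) (fun n => precsim_box_incl (Rn_down n)).
Qed.

Lemma box_incl_decreasing_limit n : box_incl P (Rn n).
Proof.
have [->|neP] := pselect (Rn n = P); first exact: box_incl_refl.
case: (prec_total (JD (JR n)) (JD JP) neP) => [RnP|[_ //]].
have [N RnN] := Rn_cvg.1 _ (JD (JR n)) RnP.
have [neR incl] := RnN _ (leq_maxl N n); case: neR.
exact: box_incl_antisym (JD (JR _)) (JD (JR _)) incl (decreasing_box_incl (leq_maxr N n)).
Qed.

Section Limit.
Variable z : R * R.
Hypotheses (cvz : (fun n => F (Rn n)) @ \oo --> z) (Fz : forall n, coord_le z (F (Rn n)))
  (wz : coord_le (F P) z).

Lemma decreasing_limit_not_on_edge : (F P).1 < z.1 -> z.2 <= (F P).2 -> False.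
Proof.
move=> lt1 le2; have cR n := domain_classical (JD (JR n)).
have [Zw ZF] := (mF JP, fun n => mF (JR n)); have [Zz _] := mechanism_cvg_lower JP JR cvz.
have FP_lt n : lt_pt (F P) (F (Rn n)).
  have [Fz1 Fz2] := Fz n; split; first lra.
  rewrite lt_neqAle (le_trans wz.2 Fz2) andbT; apply/negP => /eqP eq2.
  by apply: (npref_dominate (cR n) Zw (ZF n) _ _ _ (sF (JR n) JP)); rewrite ?eq2 //; lra.
have R0zw : Rn 0 z (F P).
  apply: (cvg_pref_upper (cR 0%N) Zw _ cvz); near=> n.
  exact: (box_incl_gt (cR n) (cR 0%N) (decreasing_box_incl (leq0n n)) Zw (ZF n) (FP_lt n)
    (sF (JR n) JP)).
by apply: (npref_dominate (cR 0%N) Zw Zz _ _ _ R0zw); lra.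
Unshelve. all: by end_near.
Qed.

Lemma decreasing_limit_interior : (F P).1 < z.1 -> (F P).2 < z.2 -> P z (F P).
Proof.
move=> lt1 lt2; apply: contrapT => nPzw.
have cP := domain_classical (JD JP); have Zw := mF JP.
have [Zz _] := mechanism_cvg_lower JP JR cvz.
have [z1 z2 z3] := (inZP z).1 Zz; have [w1 w2 w3] := (inZP (F P)).1 Zw.
have [|d [/andP[d0 dw] _ nPu _]] :=
  open_shift (m := z.1 - (F P).1) (closed_openC (closed_upper cP Zw)) nPzw; first lra.
have Zu : inZ (z.1 - d, z.2) by apply/inZP; split=> /=; lra.
have wu : lt_pt (F P) (z.1 - d, z.2) by split=> /=; lra.
have [b [Db [bwu buw]]] := rD.2.2 _ _ Zw Zu wu; have cb := domain_classical Db.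
have neP : b <> P by move=> ebP; apply: nPu; move: buw; rewrite ebP.
case: (prec_total Db (JD JP) neP) => [[_ bP]|Pb].
  exact/nPu/(box_incl_gt cb cP bP Zw Zu wu buw).
have [N Rnb] := Rn_cvg.2 b Db Pb.
have bzw : b z (F P).
  apply: (cvg_pref_upper cb Zw _ cvz); exists N => // n /= Nn; have [Fz1 Fz2] := Fz n.
  apply: (box_incl_gt (domain_classical (JD (JR n))) cb (Rnb n Nn).2 Zw (mF (JR n)) _ (sF (JR n) JP)).
  by split; lra.
by apply: (npref_dominate cb Zu Zz) (pref_trans cb bzw bwu) => /=; lra.
Qed.

Lemma decreasing_limit_upper : P z (F P).
Proof.
have cP := domain_classical (JD JP); have Zw := mF JP.
have [Zz _] := mechanism_cvg_lower JP JR cvz; have [z1 z2] := wz.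
have [le1|lt1] := leP z.1 (F P).1; first exact: (pref_dominate cP Zz Zw le1 z2).
have [le2|lt2] := leP z.2 (F P).2; first by case: (decreasing_limit_not_on_edge lt1 le2).
exact: decreasing_limit_interior.
Qed.

End Limit.

Lemma decreasing_indirect_pref :
  exists z, [/\ inZ z, (fun n => F (Rn n)) @ \oo --> z & indirect_pref F P z].
Proof.
have [z [cvz Fz wz]] := nonincreasing_bounded_cvg
  (fun m n mn => strategy_proof_monotone (JR n) (JR m) (decreasing_box_incl mn))
  (fun n => strategy_proof_monotone JP (JR n) (@box_incl_decreasing_limit n)).
have [Zz PFz] := mechanism_cvg_lower JP JR cvz.
by exists z; split=> //; split=> //; split=> //; exact: decreasing_limit_upper Fz wz.
Qed.

End Decreasing.

Lemma VF_continuous_of_order_converges :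
  (forall P Rn, J P -> (forall n, J (Rn n)) -> order_converges J Rn P -> order_converges D Rn P) ->
  VF_continuous J F.
Proof.
move=> toD P JP Rn JR [up|down] /(toD P Rn JP JR) cvg.
  by have [z [Zz cvz Vz]] := increasing_indirect_pref JP JR up cvg; exists z.
by have [z [Zz cvz Vz]] := decreasing_indirect_pref JP JR down cvg; exists z.
Qed.

End Domain.

Theorem mainTheorem6 (R : realType) (D : set (pref R)) :
  rich_single_crossing D ->
  (forall F : pref R -> pt R,
      mechanism_on D F -> strategy_proof D F -> VF_continuous D F) /\
  (forall (Plo Phi : pref R), D Plo -> D Phi -> precsim Plo Phi ->
   forall F : pref R -> pt R,
      mechanism_on (closed_interval D Plo Phi) F ->
      strategy_proof (closed_interval D Plo Phi) F ->
      VF_continuous (closed_interval D Plo Phi) F).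
Proof.
move=> rD; split=> [F mF sF|Plo Phi DPlo DPhi lohi F mF sF].
  exact: (VF_continuous_of_order_converges rD (J := D)).
apply: (VF_continuous_of_order_converges rD) => // [P [] //|P Rn JP JR].
exact: order_converges_interval.
Qed.
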